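(* Let $Q$ be a finite quiver of diameter $1$. The assignment $\sigma\mapsto(Q^+_\sigma,Q^-_\sigma)$ restricts to a bijection $P$ from the set $\sigma(Q)^{\mathrm a}$ of acyclic labelings of $Q$ onto the set $\mathrm R(F(Q))$ of Reedy structures on $F(Q)$.
   Context: $Q$ has diameter $1$ if no vertex is both the target of an arrow and the source of an arrow. $F(Q)$ is the free category on $Q$. A labeling is a map $\sigma\colon Q_1\to\{+,-\}$. It is acyclic if the orientation of the underlying undirected multigraph obtained by reversing the arrows labelled $-$ has no directed cycle. $Q^+_\sigma$ and $Q^-_\sigma$ are the wide subcategories of $F(Q)$ generated by the arrows labelled $+$ and $-$ respectively. A Reedy structure on a small category $J$ is a pair $(J^+,J^-)$ of wide subcategories for which there exists a degree function $\deg\colon\mathrm{ob}J\to\mathbb N$ such that: - non-identity morphisms of $J^+$ strictly raise degree; - non-identity morphisms of $J^-$ strictly lower degree; - every morphism factors uniquely as a morphism of $J^-$ followed by a morphism of $J^+$. The degree function itself is not part of the data. *)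

From mathcomp Require Import all_boot.
Set Implicit Arguments. Unset Strict Implicit. Unset Printing Implicit Defensive.

Section Quiver.
Variables (V A : finType) (src tgt : A -> V).

Definition diameter1 : Prop :=
  forall v : V, ~ ((exists a : A, tgt a = v) /\ (exists b : A, src b = v)).

(* The free category F(Q): objects are vertices, morphisms x -> y are paths
   [a1; ...; an] with src a1 = x, tgt ai = src a(i+1), tgt an = y;
   the identity at x is the empty path; composition is concatenation
   (diagrammatic order: (x,y,p) then (y,z,q) gives (x,z,p++q)). *)
Fixpoint is_path (x : V) (p : seq A) (y : V) : bool :=
  match p with
  | [::] => x == y
  | a :: p' => (src a == x) && is_path (tgt a) p' y
  end.

Definition Mor := (V * V * seq A)%type.
Definition valid_mor (m : Mor) : bool := is_path m.1.1 m.2 m.1.2.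

Definition wide_subcat (S : Mor -> Prop) : Prop :=
  [/\ (forall m, S m -> valid_mor m),
      (forall x : V, S (x, x, [::])) &
      (forall (x y z : V) (p q : seq A), S (x, y, p) -> S (y, z, q) -> S (x, z, p ++ q))].

Definition generated_subcat (G : A -> bool) : Mor -> Prop :=
  fun m => forall S : Mor -> Prop, wide_subcat S ->
    (forall a, G a -> S (src a, tgt a, [:: a])) -> S m.

(* labelings sigma : Q_1 -> {+,-}, with true = + and false = - *)
Definition labeling := {ffun A -> bool}.

(* orientation after reversing the arrows labelled - *)
Definition otail (s : labeling) (a : A) : V := if s a then src a else tgt a.
Definition ohead (s : labeling) (a : A) : V := if s a then tgt a else src a.

Definition has_directed_cycle (s : labeling) : Prop :=
  exists (a : A) (w : seq A),
    path (fun b c => ohead s b == otail s c) a w /\ ohead s (last a w) = otail s a.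

Definition acyclic (s : labeling) : Prop := ~ has_directed_cycle s.

Definition Qplus (s : labeling) : Mor -> Prop := generated_subcat (fun a => s a).
Definition Qminus (s : labeling) : Mor -> Prop := generated_subcat (fun a => ~~ s a).

(* Reedy structure (J+, J-) on F(Q); non-identity morphisms of F(Q) are exactly
   those with nonempty path. *)
Definition is_reedy (Jp Jm : Mor -> Prop) : Prop :=
  wide_subcat Jp /\ wide_subcat Jm /\
  exists deg : V -> nat,
    [/\ (forall x y p, Jp (x, y, p) -> p <> [::] -> deg x < deg y),
        (forall x y p, Jm (x, y, p) -> p <> [::] -> deg y < deg x) &
        (forall x y p, valid_mor (x, y, p) ->
           exists! t : V * seq A * seq A,
             [/\ Jm (x, t.1.1, t.1.2), Jp (t.1.1, y, t.2) & t.1.2 ++ t.2 = p])].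

End Quiver.

(* Under diameter 1 every path of F(Q) has length at most one, so a wide
   subcategory of F(Q) is nothing but the set of arrows it contains, and a
   morphism of length one factors as (identity, arrow) or (arrow, identity).
   Hence a Reedy structure is a splitting of the arrows into a + part and a -
   part, i.e. a labeling, and its degree function is exactly a height function
   strictly increasing along the reoriented arrows; such a function exists iff
   the reoriented quiver has no directed cycle (take the number of strict
   predecessors of a vertex). *)
From mathcomp Require Import all_boot.
From Stdlib Require Import FunctionalExtensionality PropExtensionality ClassicalDescription.
Set Implicit Arguments. Unset Strict Implicit. Unset Printing Implicit Defensive.

Section ReorientedQuiver.
Variables (V A : finType) (src tgt : A -> V) (s : labeling A).

Local Notation otail := (otail src tgt s).
Local Notation ohead := (ohead src tgt s).

Definition walk_rel : rel A := fun b c => ohead b == otail c.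

Definition reoriented_edge : rel V :=
  fun u v => [exists a, (otail a == u) && (ohead a == v)].

Definition strict_ancestors (v : V) : {set V} :=
  [set u | [exists u', reoriented_edge u u' && connect reoriented_edge u' v]].

Definition height (v : V) : nat := #|strict_ancestors v|.

Lemma acyclic_of_height (deg : V -> nat) :
  (forall a, deg (otail a) < deg (ohead a)) -> acyclic src tgt s.
Proof.
move=> deg_lt [a [w [walk_w closed_w]]].
suff: deg (otail a) < deg (ohead (last a w)) by rewrite closed_w ltnn.
elim: w a walk_w {closed_w} => [|b w IHw] a //= /andP[/eqP ab walk_w].
by apply: ltn_trans (IHw _ walk_w); rewrite -ab.
Qed.

Lemma reoriented_path_walk (p : seq V) (x : V) (a : A) :
  path reoriented_edge x p -> ohead a = x ->
  exists w, path walk_rel a w /\ ohead (last a w) = last x p.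
Proof.
elim: p x a => [|y p IHp] x a /=; first by move=> _ <-; exists [::].
case/andP=> /existsP[b /andP[/eqP tail_b /eqP head_b]] path_p head_a.
have [w [walk_w last_w]] := IHp y b path_p head_b.
by exists (b :: w); rewrite /= /walk_rel head_a tail_b eqxx.
Qed.

Lemma height_lt : acyclic src tgt s -> forall a, height (otail a) < height (ohead a).
Proof.
move=> acyc a; apply/proper_card/properP; split.
- apply/subsetP=> u; rewrite !inE => /existsP[u' /andP[edge_u conn_u]].
  apply/existsP; exists u'; rewrite edge_u (connect_trans conn_u) //.
  by apply/connect1/existsP; exists a; rewrite !eqxx.
- exists (otail a); rewrite inE.
    apply/existsP; exists (ohead a); rewrite connect0 andbT.
    by apply/existsP; exists a; rewrite !eqxx.
  apply/negP=> /existsP[u' /andP[/existsP[b /andP[/eqP tail_b /eqP head_b]]]].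
  case/connectP=> p path_p last_p.
  have [w [walk_w last_w]] := reoriented_path_walk path_p head_b.
  by apply: acyc; exists b, w; rewrite last_w -last_p tail_b.
Qed.

End ReorientedQuiver.

Section DiameterOne.
Variables (V A : finType) (src tgt : A -> V).
Hypothesis diam1 : diameter1 src tgt.

Local Notation Mor := (Mor V A).

Definition arrow_mor (a : A) : Mor := (src a, tgt a, [:: a]).

Lemma no_composable_arrows (a b : A) : tgt a <> src b.
Proof. by move=> ab; apply: diam1; split; [exists a | exists b]. Qed.

Definition subcat_of_arrows (G : pred A) (m : Mor) : Prop :=
  let: (x, y, p) := m in
  match p with
  | [::] => x = y
  | [:: a] => [/\ G a, x = src a & y = tgt a]
  | _ => False
  end.

Lemma subcat_of_arrowsP (G : pred A) (a : A) :
  subcat_of_arrows G (arrow_mor a) <-> G a.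
Proof. by split=> [[]|]. Qed.

Lemma valid_mor_short (m : Mor) : valid_mor src tgt m -> subcat_of_arrows predT m.
Proof.
case: m => [[x y] [|a [|b p]]]; rewrite /valid_mor /=.
- by move/eqP.
- by case/andP=> /eqP-> /eqP->.
- by case/and3P=> _ /eqP /esym /no_composable_arrows.
Qed.

Lemma wide_subcat_of_arrows (G : pred A) : wide_subcat src tgt (subcat_of_arrows G).
Proof.
split=> [[[x y] [|a [|b p]]] //=|//|x y z [|a [|? ?]] [|b [|? ?]] //=].
- by move=> ->; rewrite /valid_mor /=.
- by case=> _ -> ->; rewrite /valid_mor /= !eqxx.
- by move=> -> ->.
- by move=> ->.
- by case=> ? ? -> ->.
- by case=> _ _ -> [_ /no_composable_arrows].
Qed.

Lemma generated_subcatE (G : pred A) :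
  generated_subcat src tgt G = subcat_of_arrows G.
Proof.
apply: functional_extensionality => m; apply: propositional_extensionality; split.
  by apply; [exact: wide_subcat_of_arrows | move=> a /subcat_of_arrowsP].
move=> Gm S [_ S_id _] S_arrows.
case: m Gm => [[x y] [|a [|b p]]] //=; first by move=> ->.
by case=> G_a -> ->; apply: S_arrows.
Qed.

Definition arrows_in (S : Mor -> Prop) : pred A :=
  fun a => if excluded_middle_informative (S (arrow_mor a)) then true else false.

Lemma arrows_inP (S : Mor -> Prop) (a : A) : reflect (S (arrow_mor a)) (arrows_in S a).
Proof. by rewrite /arrows_in; case: excluded_middle_informative; constructor. Qed.

Lemma wide_subcatE (S : Mor -> Prop) :
  wide_subcat src tgt S -> S = subcat_of_arrows (arrows_in S).
Proof.
case=> S_valid S_id _.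
apply: functional_extensionality => -[[x y] p]; apply: propositional_extensionality.
split=> [Sm | ].
  have := valid_mor_short (S_valid _ Sm).
  by case: p Sm => [|a [|b p]] //= Sm [_ ex ey]; subst x y; split=> //; apply/arrows_inP.
case: p => [|a [|b p]] //=; first by move=> ->.
by case=> /arrows_inP S_a -> ->.
Qed.

Lemma subcat_of_arrows_inj (G H : pred A) :
  subcat_of_arrows G = subcat_of_arrows H -> G =1 H.
Proof.
move=> GH a; apply/idP/idP.
- by move/(subcat_of_arrowsP G); rewrite GH => /subcat_of_arrowsP.
- by move/(subcat_of_arrowsP H); rewrite -GH => /subcat_of_arrowsP.
Qed.

Lemma arrows_factorization (s : labeling A) (x y : V) (p : seq A) :
  valid_mor src tgt (x, y, p) ->
  exists! t : V * seq A * seq A,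
    [/\ subcat_of_arrows (fun a => ~~ s a) (x, t.1.1, t.1.2),
        subcat_of_arrows (fun a => s a) (t.1.1, y, t.2) & t.1.2 ++ t.2 = p].
Proof.
move/valid_mor_short; case: p => [|a [|? ?]] //= => [<- | [_ -> ->]].
  exists (x, [::], [::]); split=> // -[[z p1] p2] /= [].
  by case: p1 p2 => [|? ?] [|? ?] //= ->.
case s_a: (s a).
  exists (src a, [::], [:: a]); split=> // -[[z p1] p2] /= [].
  case: p1 => [|b [|? ?]] //=; first by move=> <- _ ->.
  by case=> /negP + _ _ _ [b_a _]; rewrite b_a s_a.
exists (tgt a, [:: a], [::]); split=> /=; first by rewrite s_a.
move=> [[z p1] p2] /= [].
case: p1 p2 => [|b [|? ?]] [|c [|? ?]] //=.
- by move=> _ [s_c _ _] [c_a]; rewrite c_a s_a in s_c.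
- by case=> _ _ -> _ [->].
Qed.

Lemma reedy_of_height (s : labeling A) (deg : V -> nat) :
  (forall a, deg (otail src tgt s a) < deg (ohead src tgt s a)) ->
  is_reedy src tgt (subcat_of_arrows (fun a => s a))
                   (subcat_of_arrows (fun a => ~~ s a)).
Proof.
move=> deg_lt; do 2!(split; first exact: wide_subcat_of_arrows).
exists deg; split; last exact: arrows_factorization.
- move=> x y [|a [|? ?]] //= [s_a -> ->] _.
  by have := deg_lt a; rewrite /otail /ohead s_a.
- move=> x y [|a [|? ?]] //= [/negbTE s_a -> ->] _.
  by have := deg_lt a; rewrite /otail /ohead s_a.
Qed.

Lemma acyclic_of_reedy (s : labeling A) :
  is_reedy src tgt (subcat_of_arrows (fun a => s a))
                   (subcat_of_arrows (fun a => ~~ s a)) ->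
  acyclic src tgt s.
Proof.
case=> _ [_ [deg [deg_p deg_m _]]]; apply: (@acyclic_of_height _ _ _ _ _ deg) => a.
rewrite /otail /ohead; case s_a: (s a).
- by apply: (deg_p _ _ [:: a]) => //=; rewrite s_a.
- by apply: (deg_m _ _ [:: a]) => //=; rewrite s_a.
Qed.

(* Uniqueness of the factorization of the one-arrow morphism [a] forbids [a]
   from lying in both classes; existence puts it in one of them. *)
Lemma reedy_arrows_complement (Jp Jm : Mor -> Prop) :
  is_reedy src tgt Jp Jm -> arrows_in Jm =1 predC (arrows_in Jp).
Proof.
case=> [[Jp_valid Jp_id _] [[Jm_valid Jm_id _] [_ [_ _ factor]]]] a /=.
have valid_a : valid_mor src tgt (arrow_mor a) by rewrite /valid_mor /= !eqxx.
have [[[z p1] p2] [[Jm_p1 Jp_p2 /= p12] uniq_a]] := factor _ _ _ valid_a.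
apply/arrows_inP/negP=> [Jm_a /arrows_inP Jp_a | not_Jp_a].
  have e1 := uniq_a (src a, [::], [:: a]) (And3 (Jm_id _) Jp_a erefl).
  by have := uniq_a (tgt a, [:: a], [::]) (And3 Jm_a (Jp_id _) erefl); rewrite e1 => -[].
case: p1 {uniq_a} p12 Jm_p1 Jp_p2 => [|b [|? ?]] //= => [-> | [-> ->]] Jm_p1 Jp_p2.
  have /= ez := valid_mor_short (Jm_valid _ Jm_p1); subst z.
  by case: not_Jp_a; apply/arrows_inP.
by have /= ez := valid_mor_short (Jp_valid _ Jp_p2); subst z.
Qed.

End DiameterOne.

Theorem mainTheorem5 (V A : finType) (src tgt : A -> V) :
  diameter1 src tgt ->
  [/\ (forall s : labeling A, acyclic src tgt s ->
         is_reedy src tgt (Qplus src tgt s) (Qminus src tgt s)),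
      (forall s t : labeling A, acyclic src tgt s -> acyclic src tgt t ->
         (Qplus src tgt s, Qminus src tgt s) = (Qplus src tgt t, Qminus src tgt t) ->
         s = t) &
      (forall Jp Jm : Mor V A -> Prop, is_reedy src tgt Jp Jm ->
         exists s : labeling A, acyclic src tgt s /\
           (Qplus src tgt s, Qminus src tgt s) = (Jp, Jm))].
Proof.
move=> diam1; rewrite /Qplus /Qminus; split.
- move=> s acyc; rewrite !generated_subcatE //.
  exact: reedy_of_height (height_lt acyc).
- move=> s t _ _ [st _]; rewrite !generated_subcatE // in st.
  by apply/ffunP; apply: subcat_of_arrows_inj st.
- move=> Jp Jm reedy; pose s : labeling A := [ffun a => arrows_in src tgt Jp a].
  have [Jp_wide [Jm_wide _]] := reedy.
  have JpE : Jp = subcat_of_arrows src tgt (fun a => s a).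
    rewrite (wide_subcatE diam1 Jp_wide); congr subcat_of_arrows.
    by apply: functional_extensionality => a; rewrite ffunE.
  have JmE : Jm = subcat_of_arrows src tgt (fun a => ~~ s a).
    rewrite (wide_subcatE diam1 Jm_wide); congr subcat_of_arrows.
    apply: functional_extensionality => a.
    by rewrite (reedy_arrows_complement diam1 reedy) ffunE.
  exists s; rewrite !generated_subcatE // -JpE -JmE; split=> //.
  by apply: acyclic_of_reedy; rewrite -JpE -JmE.
Qed.
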